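(* If $\mathfrak{F}=(X,R,Q)$ is a finite $\mathsf{MIPC}$-frame, then there is a finite $\mathsf{MS4}$-frame $\mathfrak{G}$ validating $\mathsf{LKur}=\mathsf{MS4}+\Box\forall\Diamond\Box p\to\Diamond\forall p$ such that $\mathfrak{F}$ is isomorphic to the skeleton $\rho\mathfrak{G}$.
   Context: An $\mathsf{MIPC}$-frame is $(X,R,Q)$ with $R$ a partial order, $Q$ a quasi-order, $R\subseteq Q$, and $xQy$ implying $\exists z$ with $xRz$ and $zE_Qy$, where $xE_Qy$ iff $xQy$ and $yQx$. An isomorphism of $\mathsf{MIPC}$-frames is a bijection preserving and reflecting $R$ and $Q$. An $\mathsf{MS4}$-frame is $(Y,R,E)$ with $R$ a quasi-order, $E$ an equivalence relation, such that $xEy$, $yRz$ imply $\exists u$ with $xRu$, $uEz$. $\mathsf{MS4}$ is the smallest set of formulas in the classical bimodal language $\mathcal{L}_{\Box\forall}$ containing all classical tautologies, the $\mathsf{S4}$ axioms for $\Box$, the $\mathsf{S5}$ axioms for $\forall$, and $\Box\forall p\to\forall\Box p$, closed under modus ponens, substitution, $\Box$- and $\forall$-necessitation; $\Diamond=\neg\Box\neg$. Formulas are evaluated on $\mathsf{MS4}$-frames with $\Box$ via $R$ and $\forall$ via $E$. Skeleton of $\mathfrak{G}=(Y,R,E)$: with $xE_Ry$ iff $xRy$ and $yRx$, $X'=Y/E_R$ with quotient map $\pi$; $Q=E\circ R$ ($xQy$ iff $\exists z$: $xRz$, $zEy$); $\rho\mathfrak{G}=(X',R',Q')$ with $\pi(x)R'\pi(y)$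 iff $xRy$ and $\pi(x)Q'\pi(y)$ iff $xQy$. *)

From mathcomp Require Import all_boot.
Set Implicit Arguments. Unset Strict Implicit. Unset Printing Implicit Defensive.

Inductive form : Type :=
| Var : nat -> form
| Bot : form
| Neg : form -> form
| And : form -> form -> form
| Or  : form -> form -> form
| Imp : form -> form -> form
| Box : form -> form
| All : form -> form.

Definition Dia (a : form) : form := Neg (Box (Neg a)).

Fixpoint subst (s : nat -> form) (a : form) : form :=
  match a with
  | Var n => s n
  | Bot => Bot
  | Neg b => Neg (subst s b)
  | And b c => And (subst s b) (subst s c)
  | Or b c => Or (subst s b) (subst s c)
  | Imp b c => Imp (subst s b) (subst s c)
  | Box b => Box (subst s b)
  | All b => All (subst s b)
  end.

(** classical tautology: true under every boolean valuation of formulas that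
    respects the propositional connectives (modal subformulas behave as atoms) *)
Definition taut (a : form) : Prop :=
  forall v : form -> bool,
    v Bot = false ->
    (forall b, v (Neg b) = ~~ v b) ->
    (forall b c, v (And b c) = v b && v c) ->
    (forall b c, v (Or b c) = v b || v c) ->
    (forall b c, v (Imp b c) = v b ==> v c) ->
    v a = true.

Definition p0 := Var 0.
Definition q0 := Var 1.

Inductive derivable (extra : form -> Prop) : form -> Prop :=
| d_taut a : taut a -> derivable extra a
| d_Kbox : derivable extra (Imp (Box (Imp p0 q0)) (Imp (Box p0) (Box q0)))
| d_Tbox : derivable extra (Imp (Box p0) p0)
| d_4box : derivable extra (Imp (Box p0) (Box (Box p0)))
| d_Kall : derivable extra (Imp (All (Imp p0 q0)) (Imp (All p0) (All q0)))
| d_Tall : derivable extra (Imp (All p0) p0)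
| d_4all : derivable extra (Imp (All p0) (All (All p0)))
| d_5all : derivable extra (Imp (Neg (All p0)) (All (Neg (All p0))))
| d_lc   : derivable extra (Imp (Box (All p0)) (All (Box p0)))
| d_extra a : extra a -> derivable extra a
| d_mp a b : derivable extra (Imp a b) -> derivable extra a -> derivable extra b
| d_subst s a : derivable extra a -> derivable extra (subst s a)
| d_necbox a : derivable extra a -> derivable extra (Box a)
| d_necall a : derivable extra a -> derivable extra (All a).

Definition MS4 : form -> Prop := derivable (fun _ => False).

Definition kur_ax : form := Imp (Box (All (Dia (Box p0)))) (Dia (All p0)).

Definition LKur : form -> Prop := derivable (fun a => a = kur_ax).

Definition MIPC_frame (X : Type) (R Q : X -> X -> bool) : Prop :=
  [/\ (forall x, R x x), (forall x y z, R x y -> R y z -> R x z),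
      (forall x y, R x y -> R y x -> x = y),
      (forall x, Q x x) & (forall x y z, Q x y -> Q y z -> Q x z) ] /\
  (forall x y, R x y -> Q x y) /\
  (forall x y, Q x y -> exists z, R x z /\ Q z y /\ Q y z).

Definition MS4_frame (Y : Type) (R E : Y -> Y -> bool) : Prop :=
  [/\ (forall x, R x x), (forall x y z, R x y -> R y z -> R x z),
      (forall x, E x x), (forall x y, E x y -> E y x) &
      (forall x y z, E x y -> E y z -> E x z) ] /\
  (forall x y z, E x y -> R y z -> exists u, R x u /\ E u z).

Fixpoint eval (Y : Type) (R E : Y -> Y -> bool) (V : nat -> Y -> Prop)
  (a : form) (y : Y) : Prop :=
  match a with
  | Var n => V n y
  | Bot => False
  | Neg b => ~ eval R E V b y
  | And b c => eval R E V b y /\ eval R E V c y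
  | Or b c => eval R E V b y \/ eval R E V c y
  | Imp b c => eval R E V b y -> eval R E V c y
  | Box b => forall z, R y z -> eval R E V b z
  | All b => forall z, E y z -> eval R E V b z
  end.

Definition frame_valid (Y : Type) (R E : Y -> Y -> bool) (a : form) : Prop :=
  forall V y, eval R E V a y.

Definition validates_logic (Y : Type) (R E : Y -> Y -> bool) (L : form -> Prop) :=
  forall a, L a -> frame_valid R E a.

Section Skeleton.
Variables (Y : finType) (R E : rel Y).

Definition ER (x y : Y) : bool := R x y && R y x.
Definition QG (x y : Y) : Prop := exists z, R x z /\ E z y.

Definition skel : Type := {A : {set Y} | exists y, A = [set z | ER y z]}.
Definition pi (y : Y) : skel :=
  exist _ [set z | ER y z] (ex_intro _ y erefl).

Definition skelR (A B : skel) : Prop :=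
  exists x y, A = pi x /\ B = pi y /\ R x y.
Definition skelQ (A B : skel) : Prop :=
  exists x y, A = pi x /\ B = pi y /\ QG x y.
End Skeleton.

(** The witness is the finite frame [X * bool] with [(x, b) R (y, c)] iff
    [x R y]: every point of [X] becomes a two-element [R]-cluster, so the
    skeleton gives back [X].  [E] is [E_Q] on the first coordinate, except
    that it separates the copy [(m, true)] of each maximal point [m] from
    all other points.  Above every point lies such a copy; its [E]-class
    consists of copies [(w, true)] of maximal points, each forming a final
    [R]-cluster, where [Dia Box p] forces [p].  This yields the Kuratowski
    axiom [Box All Dia Box p -> Dia All p], and hence all of [LKur] by
    soundness.  The tagging stays compatible with the commutativity of [R]
    and [E] because in an MIPC-frame a maximal [Q]-successor of [x] is
    [E_Q]-equivalent to a maximal [R]-successor of [x]. *)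
From mathcomp Require Import all_boot.
From Stdlib Require Import Setoid Classical ClassicalEpsilon ProofIrrelevance.
Set Implicit Arguments. Unset Strict Implicit.

Section Soundness.
Variables (Y : Type) (R E : Y -> Y -> bool).

Lemma eval_subst V s a y :
  eval R E V (subst s a) y <-> eval R E (fun n => eval R E V (s n)) a y.
Proof.
elim: a y => [n||b IH|b IHb c IHc|b IHb c IHc|b IHb c IHc|b IH|b IH] y //=.
- by rewrite IH.
- by rewrite IHb IHc.
- by rewrite IHb IHc.
- by rewrite IHb IHc.
- by split=> H z /H /IH.
- by split=> H z /H /IH.
Qed.

Lemma eval_taut V a y : taut a -> eval R E V a y.
Proof.
pose v b := if excluded_middle_informative (eval R E V b y) then true else false.
have vP b : reflect (eval R E V b y) (v b).
  by rewrite /v; case: excluded_middle_informative => H; constructor.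
move=> taut_a; apply/vP/taut_a => [|b|b c|b c|b c].
- by apply/vP.
- by apply/vP/negP => /= H /vP /H.
- by apply/vP/andP => /= -[/vP H1 /vP H2].
- by apply/vP/orP => /= -[/vP H|/vP H]; [left|right|left|right].
- by apply/vP/implyP => /= H /vP /H /vP.
Qed.

Lemma eval_Dia_Box_final V a y :
  (forall z, R y z -> R z y) -> eval R E V (Dia (Box a)) y -> eval R E V a y.
Proof.
move=> final_y /= dia_box_a; apply: NNPP => not_a.
by apply: dia_box_a => z /final_y zRy box_a; apply/not_a/box_a.
Qed.

Lemma derivable_sound (extra : form -> Prop) :
  MS4_frame R E -> (forall e, extra e -> frame_valid R E e) ->
  validates_logic R E (derivable extra).
Proof.
move=> [[Rrefl Rtrans Erefl Esym Etrans] Rcomm] valid_extra a.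
elim=> {a} [a taut_a||||||||| a /valid_extra //
          | a b _ IHab _ IHa | s a _ IHa | a _ IHa | a _ IHa] V y /=.
- exact: eval_taut.
- by move=> H1 H2 z yRz; apply: H1 yRz (H2 z yRz).
- by move=> H; apply: H (Rrefl y).
- by move=> H z yRz w zRw; apply: H (Rtrans _ _ _ yRz zRw).
- by move=> H1 H2 z yEz; apply: H1 yEz (H2 z yEz).
- by move=> H; apply: H (Erefl y).
- by move=> H z yEz w zEw; apply: H (Etrans _ _ _ yEz zEw).
- by move=> H z yEz H2; apply: H => w yEw; apply: H2 (Etrans _ _ _ (Esym _ _ yEz) yEw).
- by move=> H z yEz w zRw; have [u [yRu uEw]] := Rcomm _ _ _ yEz zRw; apply: H uEw.
- exact: IHab (IHa V y).
- exact/eval_subst.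
- by move=> z _; apply: IHa.
- by move=> z _; apply: IHa.
Qed.

End Soundness.

Definition is_max (X : finType) (R : rel X) (m : X) := [forall y, R m y ==> (y == m)].

Lemma is_maxP (X : finType) (R : rel X) m : reflect (forall y, R m y -> y = m) (is_max R m).
Proof.
apply: (iffP forallP) => [max_m y mRy | max_m y].
  by apply/eqP; rewrite (implyP (max_m y)).
by apply/implyP => /max_m ->.
Qed.

Section FinitePoset.
Variables (X : finType) (R : rel X).
Hypotheses (Rrefl : forall x, R x x) (Rtrans : forall x y z, R x y -> R y z -> R x z)
  (Ranti : forall x y, R x y -> R y x -> x = y).

(* A point above [w] whose up-set has least cardinality is maximal. *)
Lemma exists_max_above w : exists2 m, R w m & is_max R m.
Proof.
have [m wRm min_m] := arg_minnP (fun m => #|[set v | R m v]|) (Rrefl w).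
exists m => //; apply/is_maxP => y mRy; apply/esym/(Ranti mRy).
apply: contraTT (min_m y (Rtrans wRm mRy)).
move=> not_yRm; rewrite -ltnNge; apply: proper_card; apply/properP; split.
  by apply/subsetP => v; rewrite !inE; apply: Rtrans.
by exists m; rewrite !inE ?Rrefl.
Qed.

End FinitePoset.

Lemma skel_eq (Y : finType) (R : rel Y) (A B : skel R) : sval A = sval B -> A = B.
Proof. by apply: eq_sig_hprop => S; apply: proof_irrelevance. Qed.

Lemma skel_has_rep (Y : finType) (R : rel Y) (A : skel R) :
  exists y, [set z | ER R y z] == sval A.
Proof. by case: (svalP A) => y ->; exists y. Qed.

Definition skel_rep (Y : finType) (R : rel Y) (A : skel R) : Y := xchoose (skel_has_rep A).

Lemma pi_skel_rep (Y : finType) (R : rel Y) (A : skel R) : pi R (skel_rep A) = A.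
Proof. exact/skel_eq/eqP/(xchooseP (skel_has_rep A)). Qed.

Section SkeletonOfPreorder.
Variables (Y : finType) (R : rel Y).
Hypotheses (Rrefl : forall x, R x x) (Rtrans : forall x y z, R x y -> R y z -> R x z).

Lemma pi_eqP x y : pi R x = pi R y <-> ER R x y.
Proof.
split=> [/(f_equal sval)/setP/(_ y) | /andP[xRy yRx]]; first by rewrite !inE /ER !Rrefl.
apply/skel_eq/setP => z; rewrite !inE /ER.
apply/andP/andP => -[H1 H2].
  by split; [apply: Rtrans yRx H1 | apply: Rtrans H2 xRy].
by split; [apply: Rtrans xRy H1 | apply: Rtrans H2 yRx].
Qed.

Lemma skelR_pi x y : skelR (pi R x) (pi R y) <-> R x y.
Proof.
split=> [[x' [y' [/pi_eqP/andP[xRx' _] [/pi_eqP/andP[_ y'Ry] x'Ry']]]] | xRy].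
  exact: Rtrans (Rtrans xRx' x'Ry') y'Ry.
by exists x, y.
Qed.

Lemma skelQ_pi (E : rel Y) :
  (forall x y z, E x y -> R y z -> exists u, R x u /\ E u z) ->
  forall x y, skelQ E (pi R x) (pi R y) <-> QG R E x y.
Proof.
move=> Rcomm x y.
split=> [[x' [y' [/pi_eqP/andP[xRx' _] [/pi_eqP/andP[_ y'Ry] [z [x'Rz zEy']]]]]] | xQy].
  have [u [zRu uEy]] := Rcomm _ _ _ zEy' y'Ry.
  by exists u; split; first exact: Rtrans (Rtrans xRx' x'Rz) zRu.
by exists x, y.
Qed.

End SkeletonOfPreorder.

Section KuratowskiFrame.
Variables (X : finType) (R Q : rel X).
Hypothesis frameF : MIPC_frame R Q.

Let Rrefl : forall x, R x x. Proof. by case: frameF => [[]]. Qed.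
Let Rtrans : forall x y z, R x y -> R y z -> R x z. Proof. by case: frameF => [[]]. Qed.
Let Ranti : forall x y, R x y -> R y x -> x = y. Proof. by case: frameF => [[]]. Qed.
Let Qrefl : forall x, Q x x. Proof. by case: frameF => [[]]. Qed.
Let Qtrans : forall x y z, Q x y -> Q y z -> Q x z. Proof. by case: frameF => [[]]. Qed.
Let R_sub_Q : forall x y, R x y -> Q x y. Proof. by case: frameF => _ []. Qed.
Let Q_decomp : forall x y, Q x y -> exists z, R x z /\ Q z y /\ Q y z.
Proof. by case: frameF => _ []. Qed.

Definition EQ x y := Q x y && Q y x.

Definition top_copy (a : X * bool) := a.2 && is_max R a.1.

Definition kurR : rel (X * bool) := fun a b => R a.1 b.1.

Definition kurE : rel (X * bool) := fun a b => EQ a.1 b.1 && (top_copy a == top_copy b).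

Let kurR_refl a : kurR a a. Proof. exact: Rrefl. Qed.
Let kurR_trans a b c : kurR a b -> kurR b c -> kurR a c. Proof. exact: Rtrans. Qed.

Lemma Q_max_cluster x u : Q x u -> is_max R u -> exists2 w, R x w & is_max R w && EQ w u.
Proof.
move=> xQu /is_maxP max_u; have [w [xRw [wQu uQw]]] := Q_decomp xQu.
have [m wRm max_m] := exists_max_above Rrefl Rtrans Ranti w.
have [v [uRv [vQm mQv]]] := Q_decomp (Qtrans uQw (R_sub_Q wRm)).
move: vQm mQv; rewrite (max_u v uRv) => uQm mQu.
by exists m; [exact: Rtrans xRw wRm | rewrite max_m /EQ mQu uQm].
Qed.

Lemma QG_kur a b : QG kurR kurE a b <-> Q a.1 b.1.
Proof.
split=> [[z [aRz /andP[/andP[zQb _] _]]] | aQb]; first exact: Qtrans (R_sub_Q aRz) zQb.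
case top_b: (top_copy b).
- have /andP[_ max_b] := top_b.
  have [w aRw /andP[max_w wEb]] := Q_max_cluster aQb max_b.
  by exists (w, true); rewrite /kurE /= wEb top_b /top_copy /= max_w.
- have [w [aRw [wQb bQw]]] := Q_decomp aQb.
  by exists (w, false); rewrite /kurE /EQ /= wQb bQw top_b.
Qed.

Lemma kur_MS4_frame : MS4_frame kurR kurE.
Proof.
split; first split.
- exact: kurR_refl.
- exact: kurR_trans.
- by move=> a; rewrite /kurE /EQ Qrefl eqxx.
- by move=> a b /andP[/andP[ab ba] /eqP tab]; rewrite /kurE /EQ ab ba tab eqxx.
- move=> a b c /andP[/andP[ab ba] /eqP tab] /andP[/andP[bc cb] /eqP tbc].
  by rewrite /kurE /EQ (Qtrans ab bc) (Qtrans cb ba) tab tbc eqxx.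
- move=> a b c /andP[/andP[aQb _] _] bRc; apply/QG_kur.
  exact: Qtrans aQb (R_sub_Q bRc).
Qed.

Lemma kurR_final a b : is_max R a.1 -> kurR a b -> kurR b a.
Proof. by move=> /is_maxP max_a /max_a eq_ba; rewrite /kurR eq_ba Rrefl. Qed.

Lemma kur_valid : frame_valid kurR kurE kur_ax.
Proof.
move=> V a /= box_all_dia_box not_dia_all.
have [m aRm max_m] := exists_max_above Rrefl Rtrans Ranti a.1.
apply: (not_dia_all (m, true) aRm) => c mEc.
have max_c : is_max R c.1.
  by move: mEc => /andP[_ /eqP]; rewrite /top_copy /= max_m => /esym/andP[].
apply: (@eval_Dia_Box_final _ kurR kurE V p0 c _ (box_all_dia_box (m, true) aRm c mEc)).
by move=> d; apply: kurR_final max_c.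
Qed.

Lemma kur_validates_LKur : validates_logic kurR kurE LKur.
Proof. by apply: derivable_sound kur_MS4_frame _ => _ ->; exact: kur_valid. Qed.

Lemma pi_kur_eqP a b : pi kurR a = pi kurR b <-> a.1 = b.1.
Proof.
rewrite (pi_eqP kurR_refl kurR_trans) /ER /kurR.
by split=> [/andP[] | ->]; [exact: Ranti | rewrite Rrefl].
Qed.

Lemma kur_skel_bijective : bijective (fun x => pi kurR (x, false)).
Proof.
exists (fun A => (skel_rep A).1) => [x | A].
  exact/(pi_kur_eqP _ (x, false))/pi_skel_rep.
by rewrite -[RHS]pi_skel_rep; apply/pi_kur_eqP.
Qed.

End KuratowskiFrame.

Unset Implicit Arguments. Set Strict Implicit.

Theorem lemma5p1 (X : finType) (R Q : rel X) :
  MIPC_frame R Q ->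
  exists (Y : finType) (RY EY : rel Y),
    MS4_frame RY EY /\ validates_logic RY EY LKur /\
    exists f : X -> skel RY,
      bijective f /\
      (forall x x', R x x' <-> @skelR Y RY (f x) (f x')) /\
      (forall x x', Q x x' <-> @skelQ Y RY EY (f x) (f x')).
Proof.
move=> frameF; have frameG := kur_MS4_frame frameF.
have [[kurR_refl kurR_trans _ _ _] kurR_comm] := frameG.
exists (X * bool)%type, (kurR R), (kurE R Q); split; first exact: frameG.
split; first exact: kur_validates_LKur frameF.
exists (fun x => pi (kurR R) (x, false)); split; first exact: kur_skel_bijective frameF.
split=> x x'; first by rewrite (skelR_pi kurR_refl kurR_trans).
by rewrite (skelQ_pi kurR_refl kurR_trans kurR_comm) (QG_kur frameF).
Qed.
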